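(* Let $m\ge4$, $a\in Q\otimes V^{\otimes m-4}\otimes Q$ and $b\in V^{\otimes m-2}$. Assume that there exists $p\ge1$ such that $|a\,\omega_0^l+b\,\omega_0^{l+1}|=0$ for all $l\ge p$. Then $a=0$.
   Context: $\mathbb{K}$ is a field of characteristic zero and $V$ a symplectic $\mathbb{K}$-vector space of dimension $2g$ with symplectic basis $a_1,\ldots,a_g,b_1,\ldots,b_g$; $\omega_0=\sum_{i=1}^g(a_i\otimes b_i-b_i\otimes a_i)\in V^{\otimes2}$ represents the symplectic form. $C\colon V^{\otimes2}\to\mathbb{K}$ is the non-degenerate pairing given by the symplectic form, $C(a_i\otimes b_j)=\delta_{ij}$, $C(b_i\otimes a_j)=-\delta_{ij}$, $C(a_i\otimes a_j)=C(b_i\otimes b_j)=0$ (so $C(\omega_0)=2g$), and $Q=\ker C\subset V^{\otimes 2}$. $T(V)$ is the tensor algebra and $|x|$ denotes the class of $x$ in $T(V)/[T(V),T(V)]$. *)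

From HB Require Import structures.
From mathcomp Require Import all_boot all_order all_algebra.
Set Implicit Arguments. Unset Strict Implicit. Unset Printing Implicit Defensive.
Import Order.TTheory GRing.Theory Num.Theory.
Local Open Scope ring_scope.

(* Basis of V = K^{2g}: inl i = a_i, inr i = b_i  (i < g). *)
Definition basis (g : nat) : Type := ('I_g + 'I_g)%type.

(* A (possibly infinite) formal sum of words; the tensor algebra T(V) is the
   subspace of those with bounded word length (see [inT]). The coefficient of
   the word x_1 ... x_n (i.e. of x_1 (x) ... (x) x_n) is [t [:: x_1; ..; x_n]]. *)
Definition tensor (K : fieldType) (g : nat) : Type := seq (basis g) -> K.

Section Tensors.
Variables (K : fieldType) (g : nat).
Notation T := (tensor K g).

Definition tzero : T := fun _ => 0.
Definition tone : T := fun w => if w is [::] then 1 else 0.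
Definition tadd (x y : T) : T := fun w => x w + y w.
Definition tmul (x y : T) : T :=
  fun w => \sum_(i < (size w).+1) x (take i w) * y (drop i w).
Definition tpow (x : T) (n : nat) : T := iter n (tmul x) tone.

Definition homog (n : nat) (x : T) : Prop := forall w, size w != n -> x w = 0.
(* x is in T(V) (finitely many nonzero coefficients, as basis is finite) *)
Definition inT (x : T) : Prop := exists N, forall w, (N < size w)%N -> x w = 0.

Definition sform (x y : basis g) : K :=
  match x, y with
  | inl i, inr j => (i == j)%:R
  | inr i, inl j => - (i == j)%:R
  | _, _ => 0
  end.

(* omega_0 = sum_i (a_i (x) b_i - b_i (x) a_i) *)
Definition omega0 : T :=
  fun w => match w with [:: x; y] => sform x y | _ => 0 end.

Definition Cpair (q : T) : K :=
  \sum_(i < g) (q [:: inl i; inr i] - q [:: inr i; inl i]).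

Definition inQ (q : T) : Prop := homog 2 q /\ Cpair q = 0.

Definition inQVQ (n : nat) (a : T) : Prop :=
  exists k (q1 v q2 : 'I_k -> T),
    (forall i, [/\ inQ (q1 i), homog n (v i) & inQ (q2 i)]) /\
    forall w, a w = \sum_(i < k) tmul (tmul (q1 i) (v i)) (q2 i) w.

(* |x| = 0 in T(V)/[T(V),T(V)] : x is a finite sum of commutators *)
Definition cyc_zero (x : T) : Prop :=
  exists k (u v : 'I_k -> T),
    (forall i, inT (u i) /\ inT (v i)) /\
    forall w, x w = \sum_(i < k) (tmul (u i) (v i) w - tmul (v i) (u i) w).

End Tensors.

(* Fix a word u = x0 x1 M y0 y1 of length m and the alternating word
   z = a_i b_i b_i a_i a_i b_i ... of length 2l.  As |x y| = |y x|, the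
   hypothesis says that the sum over all rotations r of u z of
   omega_0^l(first 2l letters of r) a(rest) + omega_0^(l+1)(first 2l+2 letters) b(rest)
   vanishes.  The coefficient of a word in a power of omega_0 is the product of
   omega over consecutive pairs of letters.  Since z repeats its letter at the
   positions 2k+1, 2k+2 and omega(x, x) = 0, a term vanishes unless the pairing
   is aligned with z, and then it pairs x0 with x1 or y0 with y1 -- except for
   the single term omega_0^l(z) a(u).  Hence, as a tensor in (x0 x1) (x) (y0 y1),
   a(u) lies in omega_0 (x) V^(x)2 + V^(x)2 (x) omega_0, while a in Q (x) ... (x) Q
   means that C kills it in both slots; as C(omega_0) = 2g <> 0, this forces
   a(u) = 0. *)

From mathcomp Require Import all_boot all_algebra zify ring.
Set Implicit Arguments. Unset Strict Implicit. Unset Printing Implicit Defensive.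
Import GRing.Theory.
Local Open Scope ring_scope.

Lemma drop_catl (T : Type) n (s1 s2 : seq T) :
  (n <= size s1)%N -> drop n (s1 ++ s2) = drop n s1 ++ s2.
Proof.
rewrite leq_eqVlt => /predU1P[->|lt_n]; first by rewrite drop_size drop_size_cat.
by rewrite drop_cat lt_n.
Qed.

Lemma rot_catl (T : Type) n (s1 s2 : seq T) :
  (n <= size s1)%N -> rot n (s1 ++ s2) = drop n s1 ++ s2 ++ take n s1.
Proof. by move=> le_n; rewrite /rot drop_catl // takel_cat // catA. Qed.

Lemma rot_size_addn_cat (T : Type) n (s1 s2 : seq T) :
  rot (size s1 + n) (s1 ++ s2) = drop n s2 ++ s1 ++ take n s2.
Proof. by rewrite /rot drop_cat take_cat ltnNge leq_addr /= addKn. Qed.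

Section Tensors.
Variables (K : fieldType) (g : nat).
Local Notation T := (tensor K g).

Lemma tmul_homogl (x y : T) n w : homog n x ->
  tmul x y w = if (n <= size w)%N then x (take n w) * y (drop n w) else 0.
Proof.
move=> hx; rewrite /tmul; case: leqP => hn.
  rewrite (bigD1 (Ordinal (hn : (n < (size w).+1)%N))) //= big1 ?addr0 // => i ne_in.
  rewrite hx ?mul0r // size_takel; last by rewrite -ltnS.
  by apply: contra ne_in => /eqP eq_in; apply/eqP/val_inj.
rewrite big1 // => i _; rewrite hx ?mul0r // size_takel; last by rewrite -ltnS.
by rewrite neq_ltn (leq_ltn_trans _ hn) // -ltnS.
Qed.

Lemma tmul_homogr (x y : T) n w : homog n y ->
  tmul x y w = if (n <= size w)%N
               then x (take (size w - n) w) * y (drop (size w - n) w) else 0.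
Proof.
move=> hy; rewrite /tmul; case: leqP => hn.
  have lt_wn : (size w - n < (size w).+1)%N by rewrite ltnS leq_subr.
  rewrite (bigD1 (Ordinal lt_wn)) //= big1 ?addr0 // => i ne_in.
  rewrite hy ?mulr0 // size_drop; apply: contra ne_in => /eqP eq_in.
  by apply/eqP/val_inj => /=; have := ltn_ord i; lia.
by rewrite big1 // => i _; rewrite hy ?mulr0 // size_drop; have := ltn_ord i; lia.
Qed.

Lemma homog_tmul (x y : T) p q :
  homog p x -> homog q y -> homog (p + q) (tmul x y).
Proof.
move=> hx hy w hw; rewrite (tmul_homogl _ _ hx); case: ifP => // le_pw.
by rewrite hy ?mulr0 // size_drop; apply: contra hw => /eqP <-; rewrite subnKC.
Qed.

Lemma tmul_rcons2 (t q : T) r x y :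
  homog 2 q -> tmul t q (r ++ [:: x; y]) = t r * q [:: x; y].
Proof.
move=> hq; rewrite (tmul_homogr _ _ hq) size_cat addnK leq_addl.
by rewrite take_size_cat ?drop_size_cat.
Qed.

Lemma tmul3_cons2 (q1 v q2 : T) x y r : homog 2 q1 -> homog 2 q2 ->
  tmul (tmul q1 v) q2 [:: x, y & r] = q1 [:: x; y] * tmul v q2 r.
Proof.
move=> hq1 hq2; rewrite !(tmul_homogr _ _ hq2) /= !subSS subn0.
case: r => [|z [|z' r]]; rewrite (tmul_homogl _ _ hq1) ?mulr0 ?mul0r //=.
by rewrite take0 drop0 !subSS subn0 mulrA.
Qed.

End Tensors.

Section OmegaWords.
Variables (K : fieldType) (g : nat).
Local Notation B := (basis g).
Local Notation s := (@sform K g).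

Lemma sform_xx (x : B) : s x x = 0.
Proof. by case: x. Qed.

Fixpoint omega_coef (w : seq B) : K :=
  match w with
  | [:: x, y & r] => s x y * omega_coef r
  | [::] => 1
  | _ => 0
  end.

Lemma omega0_homog : homog 2 (@omega0 K g).
Proof. by move=> [|x [|y [|z r]]]. Qed.

Lemma tpow_omega0E l w :
  tpow (@omega0 K g) l w = if size w == (2 * l)%N then omega_coef w else 0.
Proof.
elim: l w => [|l IHl] [|x [|y r]] //=;
  rewrite (tmul_homogl _ _ omega0_homog) //=; first by case: ifP.
by rewrite take0 drop0 IHl mulnS !eqSS; case: ifP; rewrite ?mulr0.
Qed.

Lemma tpow_omega0_homog l : homog (2 * l) (tpow (@omega0 K g) l).
Proof. by move=> w /negPf hw; rewrite tpow_omega0E hw. Qed.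

Lemma omega_coef_cat u v :
  ~~ odd (size u) -> omega_coef (u ++ v) = omega_coef u * omega_coef v.
Proof.
move: {2}(size u) (leqnn (size u)) => n.
elim: n u => [|n IHn] [|x [|y u]] //= le_un; rewrite ?negbK => even_u.
- by rewrite mul1r.
- by rewrite mul1r.
by rewrite IHn ?mulrA // ltnW.
Qed.

Lemma omega_coef_pair u x y v : ~~ odd (size u) ->
  omega_coef (u ++ [:: x, y & v]) = omega_coef u * (s x y * omega_coef v).
Proof. by move=> even_u; rewrite omega_coef_cat. Qed.

End OmegaWords.

Arguments omega_coef {K g}.

Section CyclicSums.
Variables (K : fieldType) (g : nat).
Local Notation T := (tensor K g).
Local Notation B := (basis g).

Definition cycsum (f : seq B -> K) (w : seq B) : K :=
  \sum_(i < size w) f (rot i w).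

Lemma cycsum_rot1 f w : cycsum f (rot 1 w) = cycsum f w.
Proof.
rewrite /cycsum size_rot; case: w => [|x w]; first by rewrite !big_ord0.
transitivity (\sum_(i < (size w).+1) f (rot i.+1 (x :: w))).
  by apply: eq_bigr => i _; rewrite -[i.+1]addn1 rotD ?addn1.
by rewrite big_ord_recr [RHS]big_ord_recl /= rot0 rot_oversize // addrC.
Qed.

Lemma cycsum_rot f j w : cycsum f (rot j w) = cycsum f w.
Proof.
elim: j => [|j IHj]; first by rewrite rot0.
have [lt_jw | le_wj] := ltnP j (size w); first by rewrite rotS // cycsum_rot1.
by rewrite rot_oversize // leqW.
Qed.

Lemma cycsum_comp_rot f j w : cycsum (f \o rot j) w = cycsum f w.
Proof.
rewrite -(cycsum_rot f j w) /cycsum size_rot.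
by apply: eq_bigr => i _; rewrite /= rot_rot.
Qed.

Lemma cycsum_tmul (x y : T) w :
  cycsum (tmul x y) w =
  \sum_(k < (size w).+1) cycsum (fun r => x (take k r) * y (drop k r)) w.
Proof.
rewrite /cycsum -exchange_big /=.
by apply: eq_bigr => i _; rewrite /tmul size_rot.
Qed.

Lemma cycsum_tmulC (x y : T) w : cycsum (tmul x y) w = cycsum (tmul y x) w.
Proof.
rewrite !cycsum_tmul (reindex_inj rev_ord_inj); apply: eq_bigr => k _ /=.
rewrite subSS -(cycsum_comp_rot _ k); apply: eq_bigr => i _ /=.
move: (rot i w) (size_rot i w) => r size_r.
have size_drop_k : size (drop k r) = (size w - k)%N by rewrite size_drop size_r.
by rewrite /rot -size_drop_k take_size_cat ?drop_size_cat // mulrC.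
Qed.

Lemma cyc_zero_cycsum (x : T) : cyc_zero x -> forall w, cycsum x w = 0.
Proof.
move=> [k [u [v [_ hx]]]] w; rewrite /cycsum.
under eq_bigr do rewrite hx.
rewrite exchange_big big1 // => i _.
by rewrite sumrB; have := cycsum_tmulC (u i) (v i) w; rewrite /cycsum => ->; rewrite subrr.
Qed.

Lemma cycsum_tadd (x y : T) w : cycsum (tadd x y) w = cycsum x w + cycsum y w.
Proof. by rewrite /cycsum -big_split. Qed.

End CyclicSums.

Section OmegaPrefix.
Variables (K : fieldType) (g : nat).
Local Notation T := (tensor K g).
Local Notation B := (basis g).
Local Notation s := (@sform K g).

Definition omega_prefix (c : seq B -> K) (L : nat) (w : seq B) : K :=
  omega_coef (take L w) * c (drop L w).

Lemma omega_prefix_pair c L u x y v :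
  ~~ odd (size u) -> (size u + 2 <= L)%N ->
  omega_prefix c L (u ++ [:: x, y & v]) =
  s x y * (omega_coef u * omega_prefix c (L - size u - 2) v).
Proof.
move=> even_u le_uL; rewrite /omega_prefix take_cat drop_cat ltnNge.
rewrite (leq_trans (leq_addr 2 _) le_uL) /=.
set k := (L - size u - 2)%N; have -> : (L - size u = k.+2)%N by rewrite /k; lia.
by rewrite /= omega_coef_pair // mulrCA !mulrA.
Qed.

Lemma omega_prefix_repeat c L u z v :
  ~~ odd (size u) -> (size u + 2 <= L)%N ->
  omega_prefix c L (u ++ [:: z, z & v]) = 0.
Proof. by move=> even_u le_uL; rewrite omega_prefix_pair // sform_xx mul0r. Qed.

Lemma cycsum_tmul_tpow_omega0 (c : T) l w : (2 * l <= size w)%N ->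
  cycsum (tmul c (tpow (@omega0 K g) l)) w =
  \sum_(j < size w) omega_prefix c (2 * l) (rot j w).
Proof.
move=> le_lw; rewrite cycsum_tmulC; apply: eq_bigr => j _.
rewrite (tmul_homogl _ _ (@tpow_omega0_homog K g l)) size_rot le_lw.
by rewrite tpow_omega0E size_takel ?size_rot // eqxx.
Qed.

Lemma cyc_zero_omega_sum (a b : T) l w :
  cyc_zero (tadd (tmul a (tpow (@omega0 K g) l)) (tmul b (tpow (@omega0 K g) l.+1))) ->
  (2 * l.+1 <= size w)%N ->
  \sum_(j < size w)
    (omega_prefix a (2 * l) (rot j w) + omega_prefix b (2 * l.+1) (rot j w)) = 0.
Proof.
move=> /cyc_zero_cycsum/(_ w) + le_lw.
by rewrite cycsum_tadd !cycsum_tmul_tpow_omega0 -?big_split //; lia.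
Qed.

End OmegaPrefix.

Section Contraction.
Variables (K : fieldType) (g : nat).
Local Notation T := (tensor K g).
Local Notation B := (basis g).
Local Notation s := (@sform K g).

Definition pairC (F : B -> B -> K) : K := \sum_(x : B) \sum_(y : B) s x y * F x y.

Lemma eq_pairC F G : (forall x y, F x y = G x y) -> pairC F = pairC G.
Proof. by move=> eFG; apply: eq_bigr => x _; apply: eq_bigr => y _; rewrite eFG. Qed.

Lemma pairCD F G : pairC (fun x y => F x y + G x y) = pairC F + pairC G.
Proof.
rewrite /pairC -big_split; apply: eq_bigr => x _.
by rewrite -big_split; apply: eq_bigr => y _; rewrite mulrDr.
Qed.

Lemma pairCZl c F : pairC (fun x y => c * F x y) = c * pairC F.
Proof.
rewrite /pairC mulr_sumr; apply: eq_bigr => x _.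
by rewrite mulr_sumr; apply: eq_bigr => y _; rewrite mulrCA.
Qed.

Lemma pairCZr c F : pairC (fun x y => F x y * c) = pairC F * c.
Proof. by rewrite mulrC -pairCZl; apply: eq_pairC => x y; rewrite mulrC. Qed.

Lemma pairC_sum (I : Type) (r : seq I) (F : I -> B -> B -> K) :
  pairC (fun x y => \sum_(i <- r) F i x y) = \sum_(i <- r) pairC (F i).
Proof.
rewrite /pairC; under eq_bigr do under eq_bigr do rewrite mulr_sumr.
by under eq_bigr do rewrite exchange_big; rewrite exchange_big.
Qed.

Lemma pairC_Cpair (q : T) : pairC (fun x y => q [:: x; y]) = Cpair q.
Proof.
rewrite /pairC /Cpair big_sumType /= sumrB; congr (_ + _).
  apply: eq_bigr => i _; rewrite big_sumType /=.
  rewrite big1 ?add0r => [|j _]; last by rewrite mul0r.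
  rewrite (bigD1 i) //= eqxx mul1r big1 ?addr0 // => j /negPf ne_ji.
  by rewrite eq_sym ne_ji mul0r.
rewrite -sumrN; apply: eq_bigr => i _; rewrite big_sumType /=.
rewrite [X in _ + X]big1 ?addr0 => [|j _]; last by rewrite mul0r.
rewrite (bigD1 i) //= eqxx mulNr mul1r big1 ?addr0 // => j /negPf ne_ji.
by rewrite eq_sym ne_ji oppr0 mul0r.
Qed.

Lemma pairC_sform : pairC s = (2 * g)%:R.
Proof.
rewrite -[pairC s]/(pairC (fun x y => @omega0 K g [:: x; y])) pairC_Cpair /Cpair.
rewrite (eq_bigr (fun=> 2%:R)) => [|i _]; last by rewrite /= !eqxx opprK.
by rewrite sumr_const card_ord natrM mulr_natr.
Qed.

Lemma inQVQ_homog n (a : T) : inQVQ n a -> homog (n + 4) a.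
Proof.
move=> [k [q1 [v [q2 [hq ha]]]]] w hw; rewrite ha big1 // => i _.
have [[hq1 _] hv [hq2 _]] := hq i.
by apply: (homog_tmul (homog_tmul hq1 hv) hq2); lia.
Qed.

Lemma inQVQ_contract_first n (a : T) r :
  inQVQ n a -> pairC (fun x y => a [:: x, y & r]) = 0.
Proof.
move=> [k [q1 [v [q2 [hq ha]]]]].
rewrite (eq_pairC (G := fun x y => \sum_i q1 i [:: x; y] * tmul (v i) (q2 i) r)).
  rewrite pairC_sum big1 // => i _; have [[_ C_q1] _ _] := hq i.
  by rewrite pairCZr pairC_Cpair C_q1 mul0r.
move=> x y; rewrite ha; apply: eq_bigr => i _; have [[hq1 _] _ [hq2 _]] := hq i.
exact: tmul3_cons2.
Qed.

Lemma inQVQ_contract_last n (a : T) r :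
  inQVQ n a -> pairC (fun x y => a (r ++ [:: x; y])) = 0.
Proof.
move=> [k [q1 [v [q2 [hq ha]]]]].
rewrite (eq_pairC (G := fun x y => \sum_i tmul (q1 i) (v i) r * q2 i [:: x; y])).
  rewrite pairC_sum big1 // => i _; have [_ _ [_ C_q2]] := hq i.
  by rewrite pairCZl pairC_Cpair C_q2 mulr0.
move=> x y; rewrite ha; apply: eq_bigr => i _; have [_ _ [hq2 _]] := hq i.
exact: tmul_rcons2.
Qed.

End Contraction.

Section Flanked.
Variables (K : fieldType) (g : nat).
Local Notation B := (basis g).
Local Notation s := (@sform K g).

(* As a tensor in (x0 x1) (x) (y0 y1), F lies in omega_0 (x) V^(x)2 + V^(x)2 (x) omega_0. *)
Definition flanked (F : B -> B -> B -> B -> K) : Prop :=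
  exists C D : B -> B -> K, forall x0 x1 y0 y1,
    F x0 x1 y0 y1 = s x0 x1 * C y0 y1 + s y0 y1 * D x0 x1.

Lemma flanked_ext F G :
  (forall x0 x1 y0 y1, F x0 x1 y0 y1 = G x0 x1 y0 y1) -> flanked G -> flanked F.
Proof. by move=> eFG [C [D hG]]; exists C, D => x0 x1 y0 y1; rewrite eFG hG. Qed.

Lemma flanked0 F : (forall x0 x1 y0 y1, F x0 x1 y0 y1 = 0) -> flanked F.
Proof. by move=> hF; exists (fun _ _ => 0), (fun _ _ => 0) => *; rewrite hF !mulr0 addr0. Qed.

Lemma flankedZ c F : flanked F -> flanked (fun x0 x1 y0 y1 => c * F x0 x1 y0 y1).
Proof.
move=> [C [D hF]]; exists (fun y0 y1 => c * C y0 y1), (fun x0 x1 => c * D x0 x1).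
by move=> x0 x1 y0 y1; rewrite hF mulrDr !(mulrCA c).
Qed.

Lemma flankedD F G : flanked F -> flanked G ->
  flanked (fun x0 x1 y0 y1 => F x0 x1 y0 y1 + G x0 x1 y0 y1).
Proof.
move=> [C1 [D1 hF]] [C2 [D2 hG]].
exists (fun y0 y1 => C1 y0 y1 + C2 y0 y1), (fun x0 x1 => D1 x0 x1 + D2 x0 x1).
by move=> x0 x1 y0 y1; rewrite hF hG !mulrDr addrACA.
Qed.

Lemma flanked_sum (I : Type) (r : seq I) (P : pred I) (F : I -> B -> B -> B -> B -> K) :
  (forall i, P i -> flanked (F i)) ->
  flanked (fun x0 x1 y0 y1 => \sum_(i <- r | P i) F i x0 x1 y0 y1).
Proof.
move=> hF; elim: r => [|i r IHr].
  by apply: flanked0 => *; rewrite big_nil.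
case: (boolP (P i)) => Pi.
  by apply: flanked_ext (flankedD (hF i Pi) IHr) => *; rewrite big_cons Pi.
by apply: flanked_ext IHr => *; rewrite big_cons (negbTE Pi).
Qed.

Lemma flanked_pair_first c L (u v : B -> B -> seq B) (F : B -> B -> B -> B -> K) :
  (forall y0 y1, ~~ odd (size (u y0 y1)) && (size (u y0 y1) + 2 <= L)%N) ->
  (forall x0 x1 y0 y1,
     F x0 x1 y0 y1 = omega_prefix c L (u y0 y1 ++ [:: x0, x1 & v y0 y1])) ->
  flanked F.
Proof.
move=> hu hF; exists (fun y0 y1 =>
  omega_coef (u y0 y1) * omega_prefix c (L - size (u y0 y1) - 2) (v y0 y1)).
exists (fun _ _ => 0) => x0 x1 y0 y1; have /andP[even_u le_uL] := hu y0 y1.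
by rewrite hF omega_prefix_pair // mulr0 addr0.
Qed.

Lemma flanked_pair_last c L (u v : B -> B -> seq B) (F : B -> B -> B -> B -> K) :
  (forall x0 x1, ~~ odd (size (u x0 x1)) && (size (u x0 x1) + 2 <= L)%N) ->
  (forall x0 x1 y0 y1,
     F x0 x1 y0 y1 = omega_prefix c L (u x0 x1 ++ [:: y0, y1 & v x0 x1])) ->
  flanked F.
Proof.
move=> hu hF; exists (fun _ _ => 0); exists (fun x0 x1 =>
  omega_coef (u x0 x1) * omega_prefix c (L - size (u x0 x1) - 2) (v x0 x1)).
move=> x0 x1 y0 y1; have /andP[even_u le_uL] := hu x0 x1.
by rewrite hF omega_prefix_pair // mulr0 add0r.
Qed.

Lemma flanked_pairC_eq0 (A : B -> B -> B -> B -> K) : pairC s != 0 ->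
  (forall y0 y1, pairC (fun x0 x1 => A x0 x1 y0 y1) = 0) ->
  (forall x0 x1, pairC (fun y0 y1 => A x0 x1 y0 y1) = 0) ->
  flanked A -> forall x0 x1 y0 y1, A x0 x1 y0 y1 = 0.
Proof.
move=> nz_S CA_first CA_last [C [D hA]].
set S := pairC s; set al := pairC D; set be := pairC C.
have EC y0 y1 : S * C y0 y1 + s y0 y1 * al = 0.
  rewrite -(CA_first y0 y1) (eq_pairC (fun x0 x1 => hA x0 x1 y0 y1)).
  by rewrite pairCD pairCZr pairCZl.
have ED x0 x1 : S * D x0 x1 + s x0 x1 * be = 0.
  rewrite -(CA_last x0 x1) (eq_pairC (hA x0 x1)).
  by rewrite pairCD pairCZl pairCZr addrC.
have al_be : al + be = 0.
  apply: (mulfI nz_S); rewrite mulr0 mulrDr addrC.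
  transitivity (pairC (fun y0 y1 => S * C y0 y1 + s y0 y1 * al)).
    by rewrite pairCD pairCZl pairCZr.
  by rewrite (eq_pairC EC) /pairC big1 // => x _; rewrite big1 // => y _; rewrite mulr0.
move=> x0 x1 y0 y1; apply: (mulfI nz_S); rewrite mulr0.
transitivity (s x0 x1 * (S * C y0 y1 + s y0 y1 * al) +
  s y0 y1 * (S * D x0 x1 + s x0 x1 * be) - s x0 x1 * s y0 y1 * (al + be)).
  by rewrite hA -/S; ring.
by rewrite EC ED al_be !mulr0 addr0 subrr.
Qed.

End Flanked.

Definition wrapped (T : Type) (M : seq T) (x0 x1 y0 y1 : T) : seq T :=
  [:: x0, x1 & M ++ [:: y0; y1]].

Lemma size_wrapped (T : Type) (M : seq T) x0 x1 y0 y1 :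
  size (wrapped M x0 x1 y0 y1) = (size M + 4)%N.
Proof. by rewrite /wrapped /= size_cat /=; lia. Qed.

Lemma exists_wrapped (T : Type) (w : seq T) :
  (4 <= size w)%N -> exists x0 x1 M y0 y1, w = wrapped M x0 x1 y0 y1.
Proof.
case: w => [|x0 [|x1 w]] //= le4w.
case/lastP: w le4w => [|w y1] //; case/lastP: w => [|M y0] //= _.
by exists x0, x1, M, y0, y1; rewrite /wrapped -!cats1 -catA.
Qed.

Section CyclicWordTerms.
Variables (K : fieldType) (g : nat) (M Z : seq (basis g)) (m l : nat).
Hypotheses (size_M : (size M + 4)%N = m) (size_Z : size Z = (2 * l)%N).
Hypothesis (le_ml : (m + 4 <= 2 * l)%N).
Hypothesis Z_repeat :
  forall t, odd t -> (t.+1 < size Z)%N -> exists z v, drop t Z = [:: z, z & v].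
Local Notation B := (basis g).
Local Notation U := (wrapped M).

Lemma Z_split : exists z v, Z = take 1 Z ++ [:: z, z & v].
Proof.
have [|z [v Zv]] := Z_repeat (t := 1) isT; first by rewrite size_Z; lia.
by exists z, v; rewrite -Zv cat_take_drop.
Qed.

Lemma rot_wrapped_head j x0 x1 y0 y1 : (j <= m)%N ->
  rot j (U x0 x1 y0 y1 ++ Z) = drop j (U x0 x1 y0 y1) ++ Z ++ take j (U x0 x1 y0 y1).
Proof. by move=> le_jm; rewrite rot_catl // size_wrapped size_M. Qed.

Lemma rot_wrapped_tail t x0 x1 y0 y1 :
  rot (m + t) (U x0 x1 y0 y1 ++ Z) = drop t Z ++ U x0 x1 y0 y1 ++ take t Z.
Proof. by rewrite -size_M -(size_wrapped M x0 x1 y0 y1) rot_size_addn_cat. Qed.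

Lemma omega_prefix_rot_m (c : seq B -> K) x0 x1 y0 y1 :
  omega_prefix c (2 * l) (rot m (U x0 x1 y0 y1 ++ Z)) = omega_coef Z * c (U x0 x1 y0 y1).
Proof.
rewrite -[m]addn0 rot_wrapped_tail drop0 take0 cats0 /omega_prefix.
by rewrite take_size_cat ?drop_size_cat.
Qed.

Lemma flanked_rot_head (c : seq B -> K) L j :
  ~~ odd L -> (2 * l <= L)%N -> (j < m)%N ->
  flanked (fun x0 x1 y0 y1 => omega_prefix c L (rot j (U x0 x1 y0 y1 ++ Z))).
Proof.
move=> even_L le_lL lt_jm.
have [odd_mj | even_mj] := boolP (odd (m - j)).
  have [z [v eZ]] := Z_split.
  apply: flanked0 => x0 x1 y0 y1.
  rewrite (rot_wrapped_head _ _ _ _ (ltnW lt_jm)) {1}eZ -catA catA.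
  by apply: omega_prefix_repeat;
    rewrite size_cat size_drop size_wrapped size_takel ?size_Z; lia.
apply: (flanked_pair_last (c := c) (L := L) (u := fun x0 x1 => drop j [:: x0, x1 & M])
                          (v := fun x0 x1 => Z ++ take j [:: x0, x1 & M])).
  by move=> x0 x1; rewrite size_drop /=; apply/andP; split; lia.
move=> x0 x1 y0 y1; rewrite (rot_wrapped_head _ _ _ _ (ltnW lt_jm)).
have le_jM : (j <= size [:: x0, x1 & M])%N by rewrite /=; lia.
by rewrite -[U _ _ _ _]/([:: x0, x1 & M] ++ [:: y0; y1]) drop_catl ?takel_cat // -catA.
Qed.

Lemma flanked_rot_tail (c : seq B -> K) L t :
  ~~ odd L -> (2 * l <= L)%N -> (t < 2 * l)%N -> ((0 < t) || (2 * l < L))%N ->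
  flanked (fun x0 x1 y0 y1 => omega_prefix c L (rot (m + t) (U x0 x1 y0 y1 ++ Z))).
Proof.
move=> even_L le_lL lt_tl t_L.
have [odd_t | even_t] := boolP (odd t); last first.
  apply: (flanked_pair_first (c := c) (L := L) (u := fun _ _ => drop t Z)
                             (v := fun y0 y1 => M ++ [:: y0, y1 & take t Z])).
    by move=> y0 y1; rewrite size_drop size_Z; apply/andP; split; lia.
  by move=> x0 x1 y0 y1; rewrite rot_wrapped_tail /wrapped /= -catA.
have [lt_t1 | last_t] := ltnP t.+1 (2 * l).
  have [|z [v Zv]] := Z_repeat odd_t; first by rewrite size_Z.
  apply: flanked0 => x0 x1 y0 y1; rewrite rot_wrapped_tail Zv.
  by apply: (@omega_prefix_repeat K g c L [::]) => //=; lia.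
have [z Zt] : exists z, drop t Z = [:: z].
  have := size_drop t Z; rewrite size_Z.
  by case: (drop t Z) => [|z [|? ?]] /= size_t; [exfalso; lia | exists z | exfalso; lia].
have [odd_m | even_m] := boolP (odd m).
  apply: (flanked_pair_last (c := c) (L := L) (u := fun x0 x1 => [:: z, x0, x1 & M])
                            (v := fun _ _ => take t Z)).
    by move=> x0 x1; rewrite /=; apply/andP; split; lia.
  by move=> x0 x1 y0 y1; rewrite rot_wrapped_tail Zt /wrapped /= -catA.
have [z' [v eZ]] := Z_split.
have Zt' : take t Z = take 1 Z ++ [:: z', z' & take (t - 3) v].
  rewrite {1}eZ take_cat size_takel ?size_Z; last lia.
  by rewrite ltnNge ltnW /=; last lia; have -> : (t - 1 = (t - 3).+2)%N by lia.
apply: flanked0 => x0 x1 y0 y1; rewrite rot_wrapped_tail Zt Zt' !catA.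
by apply: omega_prefix_repeat; rewrite !size_cat size_wrapped size_takel ?size_Z /=; lia.
Qed.

Lemma flanked_rot (c : seq B -> K) L j :
  ~~ odd L -> (2 * l <= L)%N -> (j < m + 2 * l)%N -> ((j != m) || (2 * l < L))%N ->
  flanked (fun x0 x1 y0 y1 => omega_prefix c L (rot j (U x0 x1 y0 y1 ++ Z))).
Proof.
move=> even_L le_lL lt_j j_L; have [lt_jm | le_mj] := ltnP j m.
  exact: flanked_rot_head.
by rewrite -(subnKC le_mj); apply: flanked_rot_tail => //; lia.
Qed.

Lemma flanked_rot_sum (a b : seq B -> K) :
  flanked (fun x0 x1 y0 y1 =>
    \sum_(j < m + 2 * l) (omega_prefix a (2 * l) (rot j (U x0 x1 y0 y1 ++ Z)) +
                         omega_prefix b (2 * l.+1) (rot j (U x0 x1 y0 y1 ++ Z)))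
    - omega_coef Z * a (U x0 x1 y0 y1)).
Proof.
have lt_m : (m < m + 2 * l)%N by lia.
pose j0 := Ordinal lt_m.
apply: (@flanked_ext _ _ _ (fun x0 x1 y0 y1 =>
    \sum_(j < m + 2 * l | j != j0) omega_prefix a (2 * l) (rot j (U x0 x1 y0 y1 ++ Z)) +
    \sum_(j < m + 2 * l) omega_prefix b (2 * l.+1) (rot j (U x0 x1 y0 y1 ++ Z)))).
  move=> x0 x1 y0 y1; rewrite big_split (bigD1 j0) //= omega_prefix_rot_m.
  by rewrite -!addrA addrC addrA subrK.
apply: flankedD; apply: flanked_sum => j.
  move=> ne_j_j0; apply: flanked_rot => //; first lia.
  by apply/orP; left; apply: contra ne_j_j0 => /eqP eq_jm; apply/eqP/val_inj.
by move=> _; apply: flanked_rot => //; lia.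
Qed.

Lemma flanked_wrapped (a b : seq B -> K) : omega_coef Z != 0 :> K ->
  (forall x0 x1 y0 y1,
     \sum_(j < size (U x0 x1 y0 y1 ++ Z))
       (omega_prefix a (2 * l) (rot j (U x0 x1 y0 y1 ++ Z)) +
        omega_prefix b (2 * l.+1) (rot j (U x0 x1 y0 y1 ++ Z))) = 0) ->
  flanked (fun x0 x1 y0 y1 => a (U x0 x1 y0 y1)).
Proof.
move=> nz_Z sum_eq0.
apply: flanked_ext (flankedZ (- (omega_coef Z)^-1) (flanked_rot_sum a b)) => x0 x1 y0 y1.
have := sum_eq0 x0 x1 y0 y1; rewrite size_cat size_wrapped size_M size_Z => ->.
by rewrite sub0r mulrN mulNr opprK mulrA mulVf ?mul1r.
Qed.

End CyclicWordTerms.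

Section AlternatingWord.
Variables (K : fieldType) (g : nat).
Local Notation B := (basis g).
Local Notation s := (@sform K g).

Fixpoint zword (x y : B) (n : nat) : seq B :=
  if n is n'.+1 then [:: x, y & zword y x n'] else [::].

Lemma size_zword x y n : size (zword x y n) = (2 * n)%N.
Proof. by elim: n x y => //= n IHn x y; rewrite IHn; lia. Qed.

Lemma zword_repeat x y n t : odd t -> (t.+1 < size (zword x y n))%N ->
  exists z v, drop t (zword x y n) = [:: z, z & v].
Proof.
rewrite size_zword; elim: n x y t => [|n IHn] x y [|[|t]] //= odd_t lt_tn.
  by case: n IHn lt_tn => [|n] //= _ _; exists y, [:: x & zword x y n].
by apply: IHn; rewrite ?negbK //; lia.
Qed.

Lemma omega_coef_zword x y n :
  s x y != 0 -> s y x != 0 -> omega_coef (zword x y n) != 0 :> K.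
Proof.
elim: n x y => [|n IHn] x y sxy syx /=; first exact: oner_neq0.
by rewrite mulf_neq0 ?IHn.
Qed.

End AlternatingWord.

Theorem proposition5p2 (K : fieldType) (g m : nat)
  (charK : [pchar K] =i pred0) (hm : (4 <= m)%N)
  (a b : tensor K g)
  (ha : inQVQ (m - 4) a) (hb : homog (m - 2) b)
  (hp : exists p : nat, (1 <= p)%N /\
     forall l : nat, (p <= l)%N ->
       cyc_zero (tadd (tmul a (tpow (@omega0 K g) l))
                      (tmul b (tpow (@omega0 K g) l.+1)))) :
  forall w, a w = 0.
Proof.
have a_homog : homog m a by have := inQVQ_homog ha; rewrite subnK.
move=> w; have [size_w | ] := eqVneq (size w) m; last exact: a_homog.
have [|x0 [x1 [M [y0 [y1 ew]]]]] := exists_wrapped (w := w); first by rewrite size_w.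
move: size_w; rewrite ew size_wrapped => size_M.
have [p [_ cyc_zero_l]] := hp; pose l := (p + m)%N.
pose i : 'I_g := match x0 with inl i | inr i => i end. (* any index; x0 shows g > 0 *)
pose Z := zword (inl i) (inr i) l.
have size_Z : size Z = (2 * l)%N by rewrite size_zword.
have a_flanked : flanked (fun x0 x1 y0 y1 => a (wrapped M x0 x1 y0 y1)).
  apply: (flanked_wrapped size_M size_Z _ (@zword_repeat _ _ _ l) (b := b)).
  - by lia.
  - by apply: omega_coef_zword; rewrite /= eqxx ?oppr_eq0 oner_neq0.
  move=> x0' x1' y0' y1'; apply: cyc_zero_omega_sum (cyc_zero_l l (leq_addr _ _)) _.
  by rewrite size_cat size_wrapped size_M size_Z; lia.
have nz_pairC : pairC (@sform K g) != 0.
  by rewrite pairC_sform ((pcharf0P K).1 charK); have := ltn_ord i; lia.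
apply: (flanked_pairC_eq0 nz_pairC _ _ a_flanked) => [y0' y1' | x0' x1'].
  exact: inQVQ_contract_first ha.
exact: (inQVQ_contract_last [:: x0', x1' & M] ha).
Qed.
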